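(* Let $\mathcal{F}$ be a TBF algorithm, let $I$ be a Tanner graph, and let $S$ be a trapping set of $\mathcal{F}$ with inducing set $I$ (i.e. $S\in\mathscr{E}_I^{\mathrm{r}}(\mathcal{F})$). Then there exists at least one induced subgraph $J$ of $S$ (induced on a set of variable nodes of $S$) such that: (1) $J$ is isomorphic to $I$; (2) $\mathcal{F}$ fails on the subgraph $J$ of $S$; (3) when $\mathcal{F}$ is run on $S$ with $V(J)$ as the set of initially corrupt variable nodes, for every variable node $v\in V(S)$ there exists an integer $l$ with $0\le l\le l^{\mathrm{m}}_{\mathcal{F}}$ such that $w^l_v\in\{1_{\mathrm s},1_{\mathrm w}\}$.
   Context: Tanner graphs: a Tanner graph $G$ is a bipartite graph with variable nodes $V(G)$, check nodes $C(G)$ and edges $E(G)$; every variable node has degree $d_{\mathrm v}$ (fixed). A subgraph $U$ of $G$ has $V(U)\subset V(G)$, $C(U)\subset C(G)$, $E(U)\subset E(G)$; $G$ also ''contains'' any graph isomorphic to a subgraph. The induced subgraph on $V_{\mathrm s}\subset V(G)$ has variable nodes $V_{\mathrm s}$, all check nodes adjacent to $V_{\mathrm s}$, and all edges of $G$ incident to $V_{\mathrm s}$. Decoding setting: the all-zero codeword is sent over the binary symmetric channel; $\mathbf y$ is the received vector; $\hat{\mathbf x}^l$ is the decision vector after iteration $l$ (with $\hat{\mathbf x}^0=\mathbf y$), and $\mathbf s^l=\hat{\mathbf x}^lH^{\mathrm T}$ its syndrome ($H$ the biadjacency matrix). A variable node $v$ is initially corrupt if $y_v=1$. TBF algorithm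 $\mathcal F=(f,l^{\mathrm m}_{\mathcal F},\Delta_{\mathrm v},\Delta_{\mathrm c})$: variable node states lie in $\mathcal A_{\mathrm v}=\{0_{\mathrm s},0_{\mathrm w},1_{\mathrm w},1_{\mathrm s}\}$ (state $a_{\mathrm s}$ or $a_{\mathrm w}$ means decision bit $a$), check node states in $\mathcal A_{\mathrm c}=\{0_{\mathrm p},0_{\mathrm n},1_{\mathrm p},1_{\mathrm n}\}$. Initialization: $w^0_v=\Delta_{\mathrm v}(y_v)$ with $\Delta_{\mathrm v}(0)\in\{0_{\mathrm s},0_{\mathrm w}\}$, $\Delta_{\mathrm v}(1)\in\{1_{\mathrm s},1_{\mathrm w}\}$; $z^1_c=\Delta_{\mathrm c}(s^0_c)$ with $\Delta_{\mathrm c}(0)\in\{0_{\mathrm p},0_{\mathrm n}\}$, $\Delta_{\mathrm c}(1)\in\{1_{\mathrm p},1_{\mathrm n}\}$. For $l=1,2,\dots$, while the syndrome is nonzero and $l<l^{\mathrm m}_{\mathcal F}$: every variable node updates $w^l_v=f(w^{l-1}_v,\chi^l_{0_{\mathrm p}}(v),\chi^l_{0_{\mathrm n}}(v),\chi^l_{1_{\mathrm p}}(v),\chi^l_{1_{\mathrm n}}(v))$, where $\chi^l_a(v)$ is the number of neighboring check nodes $c$ with $z^l_c=a$; then every check node updates $z^{l+1}_c=\Phi(s^{l-1}_c,s^l_c)$ with $\Phi(0,0)=0_{\mathrm p},\Phi(0,1)=1_{\mathrm n},\Phi(1,0)=0_{\mathrm n},\Phi(1,1)=1_{\mathrm p}$.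 Here $f:\mathcal A_{\mathrm v}\times\Xi_{d_{\mathrm v}}\to\mathcal A_{\mathrm v}$, where $\Xi_{d_{\mathrm v}}$ is the set of 4-tuples of nonnegative integers summing to $d_{\mathrm v}$; $f$ is symmetric with respect to $0$ and $1$ and every variable-node state is reachable from every other. Failure: for a TBF algorithm $\mathcal F$, a Tanner graph $G$ and a set $V_{\mathrm e}$ of initially corrupt variable nodes with induced subgraph $I$, ''$\mathcal F$ fails on the subgraph $I$ of $G$'' means $\mathcal F$ run on $G$ with initially corrupt set $V_{\mathrm e}$ does not converge (does not reach zero syndrome) within $l^{\mathrm m}_{\mathcal F}$ iterations. Trapping sets: for a Tanner graph $I$, $\mathscr E_I(\mathcal F)$ is the set of Tanner graphs $S$ containing a subgraph $J$ isomorphic to $I$ such that $\mathcal F$ fails on $J$ of $S$. $S_1\in\mathscr E_I(\mathcal F)$, with $\mathcal F$ failing on its subgraph $J_1$, belongs to $\mathscr E_I^{\mathrm r}(\mathcal F)$ if there is no $S_2\in\mathscr E_I(\mathcal F)$ with a subgraph $J_2$ such that $\mathcal F$ fails on $J_2$ of $S_2$ and there is an isomorphism between $S_2$ and a proper subgraph of $S_1$ mapping $V(J_2)$ into $V(J_1)$. Elements of $\mathscr E_I^{\mathrm r}(\mathcal F)$ are trapping sets of $\mathcal F$ with inducing set $I$; $\mathscr E_I^{\mathrm r}(\mathcal F)$ is the trapping set profile with inducing set $I$. *)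

From HB Require Import structures.
From mathcomp Require Import all_boot.
Set Implicit Arguments. Unset Strict Implicit. Unset Printing Implicit Defensive.

Record tgraph := TGraph {
  tvar : finType;
  tchk : finType;
  tedge : tvar -> tchk -> bool }.

Definition tanner (dv : nat) (G : tgraph) : Prop :=
  forall v : tvar G, #|[set c | tedge v c]| = dv.

Definition subg (G : tgraph) : Type :=
  ({set tvar G} * {set tchk G} * {set (tvar G * tchk G)})%type.

Definition is_subgraph (G : tgraph) (P : subg G) : Prop :=
  let: (VS, CS, ES) := P in
  forall e, e \in ES -> [/\ tedge e.1 e.2, e.1 \in VS & e.2 \in CS].

Definition full_subg (G : tgraph) : subg G :=
  ([set: tvar G], [set: tchk G], [set e | tedge e.1 e.2]).

Definition proper_subgraph (G : tgraph) (P : subg G) : Prop :=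
  is_subgraph P /\ P <> full_subg G.

Definition induced (G : tgraph) (Vs : {set tvar G}) : subg G :=
  (Vs, [set c | [exists v in Vs, tedge v c]],
   [set e | (e.1 \in Vs) && tedge e.1 e.2]).

Definition iso_map (H G : tgraph) (P : subg G)
  (fv : tvar H -> tvar G) (fc : tchk H -> tchk G) : Prop :=
  let: (VS, CS, ES) := P in
  [/\ injective fv, injective fc,
      fv @: [set: tvar H] = VS, fc @: [set: tchk H] = CS &
      forall v c, tedge v c = ((fv v, fc c) \in ES)].

Definition iso_to_sub (H G : tgraph) (P : subg G) : Prop :=
  exists (fv : tvar H -> tvar G) (fc : tchk H -> tchk G), iso_map P fv fc.
Arguments iso_to_sub H {G} P.

Inductive vstate := V0s | V0w | V1w | V1s.
Inductive cstate := C0p | C0n | C1p | C1n.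

Definition vbit (a : vstate) : bool :=
  match a with V0s | V0w => false | V1w | V1s => true end.

Definition vflip (a : vstate) : vstate :=
  match a with V0s => V1s | V0w => V1w | V1w => V0w | V1s => V0s end.

Definition cstate_eqb (a b : cstate) : bool :=
  match a, b with
  | C0p, C0p | C0n, C0n | C1p, C1p | C1n, C1n => true
  | _, _ => false end.

Definition Phi (sprev scur : bool) : cstate :=
  match sprev, scur with
  | false, false => C0p | false, true => C1n
  | true, false => C0n | true, true => C1p end.

Arguments iso_map {H G} P fv fc.

(* F = (f, l^m, Delta_v, Delta_c); f takes the state and the counts
   (chi_0p, chi_0n, chi_1p, chi_1n). *)
Record TBF := MkTBF {
  tbf_f : vstate -> nat -> nat -> nat -> nat -> vstate;
  tbf_lm : nat;
  tbf_Dv : bool -> vstate;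
  tbf_Dc : bool -> cstate }.

Definition in_Xi (dv a b c d : nat) : Prop := a + b + c + d = dv.

Definition fstep (dv : nat) (F : TBF) (a b : vstate) : Prop :=
  exists x0p x0n x1p x1n, in_Xi dv x0p x0n x1p x1n /\ tbf_f F a x0p x0n x1p x1n = b.

Inductive reachable (dv : nat) (F : TBF) : vstate -> vstate -> Prop :=
  | reach_refl a : reachable dv F a a
  | reach_step a b c : fstep dv F a b -> reachable dv F b c -> reachable dv F a c.

Definition TBF_valid (dv : nat) (F : TBF) : Prop :=
  [/\ (tbf_Dv F false = V0s \/ tbf_Dv F false = V0w) /\
      (tbf_Dv F true = V1s \/ tbf_Dv F true = V1w),
      (tbf_Dc F false = C0p \/ tbf_Dc F false = C0n) /\
      (tbf_Dc F true = C1p \/ tbf_Dc F true = C1n),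
      (forall a x0p x0n x1p x1n, in_Xi dv x0p x0n x1p x1n ->
         tbf_f F (vflip a) x0p x0n x1p x1n = vflip (tbf_f F a x0p x0n x1p x1n)) &
      (forall a b, reachable dv F a b)].

Definition synd (G : tgraph) (w : tvar G -> vstate) (c : tchk G) : bool :=
  odd #|[set v | tedge v c & vbit (w v)]|.

Definition chi (G : tgraph) (z : tchk G -> cstate) (v : tvar G) (a : cstate) : nat :=
  #|[set c | tedge v c & cstate_eqb (z c) a]|.

(* run G F Ve l = (w^l, z^{l+1}), with Ve the set of initially corrupt
   variable nodes (y_v = 1 iff v \in Ve) *)
Fixpoint run (G : tgraph) (F : TBF) (Ve : {set tvar G}) (l : nat)
  : (tvar G -> vstate) * (tchk G -> cstate) :=
  match l with
  | 0 => let w := fun v => tbf_Dv F (v \in Ve) in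
         (w, fun c => tbf_Dc F (synd w c))
  | l'.+1 => let: (w, z) := run F Ve l' in
         let w' := fun v => tbf_f F (w v) (chi z v C0p) (chi z v C0n)
                                          (chi z v C1p) (chi z v C1n) in
         (w', fun c => Phi (synd w c) (synd w' c))
  end.

Definition fails (G : tgraph) (F : TBF) (Ve : {set tvar G}) : Prop :=
  forall l, l <= tbf_lm F -> [exists c, synd (run F Ve l).1 c].

Definition in_EI (dv : nat) (F : TBF) (I S : tgraph) : Prop :=
  tanner dv S /\
  exists Ve : {set tvar S}, iso_to_sub I (induced Ve) /\ fails F Ve.

Definition in_ErI (dv : nat) (F : TBF) (I S1 : tgraph) : Prop :=
  tanner dv S1 /\
  exists Ve1 : {set tvar S1},
    [/\ iso_to_sub I (induced Ve1), fails F Ve1 &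
        ~ exists (S2 : tgraph) (Ve2 : {set tvar S2}) (P : subg S1)
                 (fv : tvar S2 -> tvar S1) (fc : tchk S2 -> tchk S1),
            [/\ tanner dv S2 /\ iso_to_sub I (induced Ve2), fails F Ve2,
                proper_subgraph P, iso_map P fv fc &
                fv @: Ve2 \subset Ve1]].

From mathcomp Require Import all_boot.

(* Let Ve1 be the corrupt set witnessing S \in E^r_I(F).  Suppose a variable
   node v is decided as 0 at every iteration l <= l^m.  Then v is not
   initially corrupt, and v never contributes to any syndrome bit.  Deleting
   v (and its edges, keeping every check node) yields a Tanner graph S - v on
   which the decoder computes exactly the restriction of its run on S
   (lemma [run_delete_var]).  Hence F still fails on S - v with the same
   corrupt set, which still induces a copy of I, and S - v is isomorphic to a
   proper subgraph of S via the inclusion.  This contradicts the minimality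
   clause of E^r_I(F).  Since the iterations are bounded, whether v is ever
   decided as 1 is a boolean property, so no classical reasoning is needed. *)

Set Implicit Arguments.
Unset Strict Implicit.

Definition delete_var (G : tgraph) (v : tvar G) : tgraph :=
  @TGraph {u : tvar G | u != v} (tchk G) (fun u c => tedge (val u) c).
Arguments delete_var {G} v.

Lemma run_states_succ (G : tgraph) (F : TBF) (Ve : {set tvar G}) l x :
  (run F Ve l.+1).1 x =
  tbf_f F ((run F Ve l).1 x) (chi (run F Ve l).2 x C0p)
    (chi (run F Ve l).2 x C0n) (chi (run F Ve l).2 x C1p) (chi (run F Ve l).2 x C1n).
Proof. by rewrite /=; case: (run F Ve l). Qed.

Lemma run_checks_succ (G : tgraph) (F : TBF) (Ve : {set tvar G}) l c :
  (run F Ve l.+1).2 c = Phi (synd (run F Ve l).1 c) (synd (run F Ve l.+1).1 c).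
Proof. by rewrite /=; case: (run F Ve l). Qed.

Section DeleteVariable.

Variables (G : tgraph) (v : tvar G).

(* A variable node decided as 0 is invisible to every syndrome bit, so
   deleting it does not change the syndrome. *)
Lemma synd_delete_var (w : tvar G -> vstate) (w' : tvar (delete_var v) -> vstate)
    (c : tchk G) :
  vbit (w v) = false -> (forall u, w' u = w (val u)) -> synd w' c = synd w c.
Proof.
move=> wv0 w'E; rewrite /synd.
have -> : [set x : tvar G | tedge x c & vbit (w x)] =
          val @: [set u : tvar (delete_var v) | tedge u c & vbit (w' u)].
  apply/setP => x; rewrite inE; apply/andP/imsetP.
  - move=> [xc wx]; have xv : x != v by apply/eqP => xE; rewrite xE wv0 in wx.
    by exists (exist _ x xv) => //; rewrite inE /= w'E; exact/andP.
  - by move=> [u]; rewrite inE w'E => /andP [uc wu] ->.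
by rewrite card_imset //; apply: val_inj.
Qed.

Variables (F : TBF) (Ve : {set tvar G}).

Definition restrict_corrupt : {set tvar (delete_var v)} := [set u | val u \in Ve].

Hypothesis v_zero : forall l, l <= tbf_lm F -> vbit ((run F Ve l).1 v) = false.

Lemma run_delete_var l : l <= tbf_lm F ->
  (forall u, (run F restrict_corrupt l).1 u = (run F Ve l).1 (val u)) /\
  (forall c, (run F restrict_corrupt l).2 c = (run F Ve l).2 c).
Proof.
elim: l => [|l IH] lle.
  have states0 u : (run F restrict_corrupt 0).1 u = (run F Ve 0).1 (val u).
    by rewrite /= inE.
  split => // c; exact: (congr1 (tbf_Dc F) (synd_delete_var c (v_zero lle) states0)).
have lle' : l <= tbf_lm F by apply: ltnW.
have [statesE checksE] := IH lle'.
have statesS u : (run F restrict_corrupt l.+1).1 u = (run F Ve l.+1).1 (val u).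
  have chiE a : chi (run F restrict_corrupt l).2 u a = chi (run F Ve l).2 (val u) a.
    by rewrite /chi; apply: eq_card => c; rewrite !inE checksE.
  by rewrite !run_states_succ statesE !chiE.
split => // c; rewrite !run_checks_succ.
by rewrite (synd_delete_var c (v_zero lle') statesE) (synd_delete_var c (v_zero lle) statesS).
Qed.

Lemma fails_delete_var : fails F Ve -> fails F restrict_corrupt.
Proof.
move=> failG l lle; have [statesE _] := run_delete_var lle.
have /existsP [c sc] := failG l lle; apply/existsP; exists c.
by rewrite (synd_delete_var c (v_zero lle) statesE).
Qed.

End DeleteVariable.

Section DeleteOutside.

Variables (G : tgraph) (v : tvar G) (Ve : {set tvar G}).
Hypothesis v_out : v \notin Ve.

Lemma iso_induced_delete_var (H : tgraph) :
  iso_to_sub H (induced Ve) -> iso_to_sub H (induced (restrict_corrupt v Ve)).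
Proof.
case=> fv [fc [fv_inj fc_inj fv_im fc_im edgeE]].
have fv_in x : fv x \in Ve by rewrite -fv_im; apply: imset_f.
have fv_ne x : fv x != v.
  by apply/eqP => fvE; move: (fv_in x); rewrite fvE (negbTE v_out).
exists (fun x => exist (fun u => u != v) (fv x) (fv_ne x) : tvar (delete_var v)), fc.
split => //.
- by move=> x y [] /fv_inj.
- apply/setP => u; rewrite inE; apply/imsetP/idP; first by move=> [x _ ->]; exact: fv_in.
  rewrite -fv_im => /imsetP [x _ uE].
  by exists x => //; apply: val_inj; rewrite /= uE.
- rewrite fc_im; apply/setP => c; rewrite !inE; apply/existsP/existsP.
    move=> [x /andP [xVe xc]].
    have xv : x != v by apply/eqP => xE; move: xVe; rewrite xE (negbTE v_out).
    by exists (exist _ x xv); rewrite inE /= xVe.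
  by move=> [u]; rewrite inE => /andP [uVe uc]; exists (val u); rewrite uVe.
- by move=> x c; rewrite edgeE !inE.
Qed.

End DeleteOutside.

Lemma tanner_delete_var (dv : nat) (G : tgraph) (v : tvar G) :
  tanner dv G -> tanner dv (delete_var v).
Proof. by move=> tG u; exact: tG (val u). Qed.

Definition minus_var (G : tgraph) (v : tvar G) : subg G :=
  ([set~ v], [set: tchk G], [set e : tvar G * tchk G | (e.1 != v) && tedge e.1 e.2]).

Lemma proper_minus_var (G : tgraph) (v : tvar G) : proper_subgraph (minus_var v).
Proof.
split; first by move=> e; rewrite !inE => /andP [].
by move=> /(congr1 (fun P : subg G => v \in P.1.1)); rewrite /= !inE eqxx.
Qed.

Lemma iso_delete_var (G : tgraph) (v : tvar G) :
  @iso_map (delete_var v) G (minus_var v) val id.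
Proof.
split => //.
- exact: val_inj.
- apply/setP => x; rewrite !inE; apply/imsetP/idP; first by move=> [[u uv] _ ->].
  by move=> xv; exists (exist (fun u => u != v) x xv : tvar (delete_var v)).
- by apply/setP => c; rewrite !inE; apply/imsetP; exists c.
- by move=> u c; rewrite inE /= (valP u).
Qed.

Lemma never_corrupt_not_minimal (dv : nat) (F : TBF) (I S : tgraph)
    (Ve : {set tvar S}) (v : tvar S) :
  tbf_Dv F true = V1s \/ tbf_Dv F true = V1w ->
  tanner dv S -> iso_to_sub I (induced Ve) -> fails F Ve ->
  (forall l, l <= tbf_lm F -> vbit ((run F Ve l).1 v) = false) ->
  exists (S2 : tgraph) (Ve2 : {set tvar S2}) (P : subg S)
         (fv : tvar S2 -> tvar S) (fc : tchk S2 -> tchk S),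
    [/\ tanner dv S2 /\ iso_to_sub I (induced Ve2), fails F Ve2,
        proper_subgraph P, iso_map P fv fc & fv @: Ve2 \subset Ve].
Proof.
move=> D1 tS isoI failS v_zero.
have v_out : v \notin Ve.
  by apply/negP => vVe; move: (v_zero 0 isT); rewrite /= vVe; case: D1 => ->.
exists (delete_var v), (restrict_corrupt v Ve), (minus_var v), val, id; split.
- by split; [exact: tanner_delete_var | exact: iso_induced_delete_var].
- exact: fails_delete_var.
- exact: proper_minus_var.
- exact: iso_delete_var.
- by apply/subsetP => x /imsetP [u]; rewrite inE => uVe ->.
Qed.

Theorem proposition1 (dv : nat) (F : TBF) (I S : tgraph) :
  TBF_valid dv F -> tanner dv I -> in_ErI dv F I S ->
  exists Ve : {set tvar S},
    [/\ iso_to_sub I (induced Ve),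
        fails F Ve &
        forall v : tvar S, exists l, l <= tbf_lm F /\ vbit ((run F Ve l).1 v) = true].
Proof.
move=> [[_ D1] _ _ _] _ [tS [Ve [isoI failS minimal]]].
exists Ve; split => // v.
have [/existsP [l vl] | never] :=
  boolP [exists l : 'I_(tbf_lm F).+1, vbit ((run F Ve l).1 v)].
  by exists l; rewrite -ltnS ltn_ord.
exfalso; apply: minimal.
apply: (never_corrupt_not_minimal (v := v) D1 tS isoI failS) => l lle.
apply/negbTE/negP => vl; case/negP: never; apply/existsP.
by exists (Ordinal (lle : l < (tbf_lm F).+1)).
Qed.
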